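(* For $n,m\in\mathbb{N}$ and $i\in I_{nm}$ one has $h_n(\sigma_{m,n}(i))=\sigma_{m,n}(h_{nm}(i))$.
   Context: $\Gamma_0(N)=\{\begin{pmatrix}a&b\\c&d\end{pmatrix}\in SL(2,\mathbb{Z}):N\mid c\}$. $I_N=\{[x:y]_N:\gcd(x,y,N)=1\}$, $[x:y]_N$ the class of $(x,y)$ under $(x,y)\sim(kx,ky)\bmod N$, $\gcd(k,N)=1$; the right coset $\Gamma_0(N)\begin{pmatrix}a&b\\c&d\end{pmatrix}$ is identified with $[c:d]_N\in I_N$, and $R_i^{N,1}$ denotes a representative of coset $i$. $\sigma_{m,n}:I_{nm}\to I_n$ is the projection $[x:y]_{nm}\mapsto[x:y]_n$ (induced by $\Gamma_0(nm)g\mapsto\Gamma_0(n)g$). For $i\in I_N$, $A_i=\begin{pmatrix}c&b\\0&N/c\end{pmatrix}$ where $(c,b)$ (with $c\ge1$, $c\mid N$, $0\le b\le N/c-1$, $\gcd(c,b,N/c)=1$) is the pair mapped to $i$ by $(c,b)\mapsto[c:d_N(c,b)]_N$, $d_N(c,b)=\min_{0\le k\le c-1}\{c+b+kN/c:\gcd(c,b+kN/c)=1\}$ (a bijection). $h_N:I_N\to I_N$ sends $i$ to the unique $l\in I_N$ with $\begin{pmatrix}0&1\\-N&0\end{pmatrix}R_i^{N,1}\in SL(2,\mathbb{Z})A_l$. *)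

From mathcomp Require Import all_boot all_order all_algebra.
From Stdlib Require Import ClassicalEpsilon.
Set Implicit Arguments. Unset Strict Implicit. Unset Printing Implicit Defensive.
Import Order.TTheory GRing.Theory Num.Theory.
Local Open Scope ring_scope.

(* A subset of Z^2; elements of I_N are equivalence classes, i.e. such sets. *)
Definition pairset := int * int -> Prop.

Definition P1rel (N : nat) (p q : int * int) : Prop :=
  exists k : int, coprimez k N /\
    (q.1 == k * p.1 %[mod N])%Z /\ (q.2 == k * p.2 %[mod N])%Z.

Definition primN (N : nat) (p : int * int) : Prop :=
  gcdz (gcdz p.1 p.2) N = 1%N.

Definition cls (N : nat) (p : int * int) : pairset := fun q => P1rel N p q.

Definition IN (N : nat) (C : pairset) : Prop :=
  exists p, primN N p /\ C = cls N p.

(* sigma_{m,n} : I_{nm} -> I_n, [x:y]_{nm} |-> [x:y]_n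
   (the n-class containing the elements of the given nm-class) *)
Definition sigma (m n : nat) (C : pairset) : pairset :=
  fun q => exists p, C p /\ P1rel n p q.

Definition mx2 (a b c d : int) : 'M[int]_2 :=
  \matrix_(i < 2, j < 2)
    (if i == ord0 then (if j == ord0 then a else b)
     else (if j == ord0 then c else d)).

Definition SL2Z (M : 'M[int]_2) : Prop := \det M = 1.

(* d_N(c,b) = min_{0<=k<=c-1} { c + b + k N/c : gcd(c, b + k N/c) = 1 };
   since c + b + k N/c is increasing in k, the min is at the least such k. *)
Definition dN (N c b : nat) : nat :=
  let k := find (fun k => coprime c (b + k * (N %/ c))) (iota 0 c) in
  (c + b + k * (N %/ c))%N.

Definition goodpair (N : nat) (cb : nat * nat) : Prop :=
  let: (c, b) := cb in
  [/\ (1 <= c)%N, (c %| N)%N, (b <= N %/ c - 1)%N & gcdn (gcdn c b) (N %/ c) = 1%N].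

Definition Apair (N : nat) (l : pairset) : nat * nat :=
  epsilon (inhabits (1%N, 0%N))
    (fun cb => goodpair N cb /\ cls N ((cb.1)%:Z, (dN N cb.1 cb.2)%:Z) = l).

Definition Amat (N : nat) (l : pairset) : 'M[int]_2 :=
  let: (c, b) := Apair N l in mx2 c%:Z b%:Z 0 (N %/ c)%N%:Z.

(* R_i^{N,1}: a representative in SL(2,Z) of the coset i, i.e. its bottom
   row (c,d) satisfies [c:d]_N = i. *)
Definition Rrep (N : nat) (C : pairset) : 'M[int]_2 :=
  epsilon (inhabits (1%:M : 'M[int]_2))
    (fun R => SL2Z R /\ C (R ord_max ord0, R ord_max ord_max)).

Definition WN (N : nat) : 'M[int]_2 := mx2 0 1 (- (N%:Z)) 0.

Definition hN (N : nat) (C : pairset) : pairset :=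
  epsilon (inhabits (fun _ => False) : inhabited pairset)
    (fun l => IN N l /\ exists S, SL2Z S /\ WN N *m Rrep N C = S *m Amat N l).

From mathcomp Require Import all_boot all_order all_algebra.
From mathcomp Require Import zify ring.
From Stdlib Require Import ClassicalEpsilon FunctionalExtensionality PropExtensionality.
Set Implicit Arguments. Unset Strict Implicit. Unset Printing Implicit Defensive.
Import Order.TTheory GRing.Theory Num.Theory.
Local Open Scope ring_scope.

(* h_N is the shear [c : d] |-> [c : c + d], and sigma_{m,n} only reduces representatives
   modulo n, so the two maps commute.  For R in SL(2,Z) with bottom row (c, d) and
   A = [[g, b], [0, N/g]], the matrix W_N R lies in SL(2,Z) A iff g | c and N | g d - c b.
   As d_N(g, b) = g + b mod N/g, this reads g | c and N | g (c + d) - c d_N(g, b), which,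
   g being a divisor of N coprime to d_N(g, b), says that (c, c + d) and (g, d_N(g, b))
   define the same point of I_N. *)

Lemma dvdz_lincomb d a b x y : (d %| a)%Z -> (d %| b)%Z -> (d %| x * a + y * b)%Z.
Proof. by move=> da db; rewrite rpredD ?dvdz_mull. Qed.

Lemma P1relE N p q : P1rel N p q <->
  exists2 k, coprimez k N & (N %| q.1 - k * p.1)%Z && (N %| q.2 - k * p.2)%Z.
Proof.
rewrite /P1rel; split=> [[k [Hk [H1 H2]]] | [k Hk /andP[H1 H2]]].
  by exists k; rewrite // -!eqz_mod_dvd H1 H2.
by exists k; rewrite !eqz_mod_dvd.
Qed.

Lemma P1rel_refl N p : P1rel N p p.
Proof.
apply/P1relE; exists 1; first by rewrite coprimezE coprime1n.
by rewrite !mul1r !subrr !dvdz0.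
Qed.

Lemma P1rel_sym N p q : P1rel N p q -> P1rel N q p.
Proof.
case/P1relE=> k /coprimezP[[u v] /= Huv] /andP[H1 H2].
apply/P1relE; exists u.
  by apply/coprimezP; exists (k, v); rewrite /= mulrC -Huv mulrC.
have shift x y : x - u * y = (v * x) * N + (- u) * (y - k * x).
  by rewrite -[x in LHS]mul1r -Huv; ring.
by rewrite (shift p.1 q.1) (shift p.2 q.2) !dvdz_lincomb ?dvdzz.
Qed.

Lemma P1relC N p q : P1rel N p q <-> P1rel N q p.
Proof. by split; apply: P1rel_sym. Qed.

Lemma P1rel_trans N p q r : P1rel N p q -> P1rel N q r -> P1rel N p r.
Proof.
case/P1relE=> k Hk /andP[H1 H2] /P1relE[k' Hk' /andP[H1' H2']].
apply/P1relE; exists (k' * k); first by rewrite coprimezMl Hk Hk'.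
have split_step x y z : z - k' * k * x = 1 * (z - k' * y) + k' * (y - k * x) by ring.
by rewrite (split_step _ q.1) (split_step _ q.2) !dvdz_lincomb.
Qed.

Lemma cls_eqP N p q : cls N p = cls N q <-> P1rel N p q.
Proof.
split=> [E | Hpq].
  by have := P1rel_refl N q; rewrite -[P1rel N q q]/(cls N q q) -E.
apply: functional_extensionality => r; apply: propositional_extensionality.
by split; [apply: P1rel_trans (P1rel_sym Hpq) | apply: P1rel_trans Hpq].
Qed.

Lemma primNE N p : primN N p <-> coprimez (gcdz p.1 p.2) N.
Proof. by rewrite /primN /coprimez; split=> [-> | /eqP]. Qed.

Lemma primN_dvdz1 N p d : primN N p ->
  (d %| p.1)%Z -> (d %| p.2)%Z -> (d %| N%:Z)%Z -> (d %| 1)%Z.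
Proof. by move=> prim d1 d2 dN; rewrite -[X in (_ %| X)%Z]prim !dvdz_gcd d1 d2 dN. Qed.

Lemma primN_coprime N x y : coprimez x y -> primN N (x, y).
Proof. by move=> /eqP cxy; rewrite /primN /= cxy /gcdz gcd1n. Qed.

Lemma primN_dvdn N N' p : (N' %| N)%N -> primN N p -> primN N' p.
Proof. by move=> dvdN /primNE cop; apply/primNE; apply: coprimez_dvdr cop. Qed.

Lemma P1rel_scale N k p q : primN N q ->
  (N %| q.1 - k * p.1)%Z -> (N %| q.2 - k * p.2)%Z -> P1rel N p q.
Proof.
move=> prim H1 H2; apply/P1relE; exists k; last by rewrite H1 H2.
have dk := dvdz_gcdl k N; have dN := dvdz_gcdr k N.
have dq x y : (N %| y - k * x)%Z -> (gcdz k N %| y)%Z.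
  move=> Hxy; have -> : y = 1 * (y - k * x) + x * k by ring.
  by rewrite dvdz_lincomb // (dvdz_trans dN).
by have := primN_dvdz1 prim (dq _ _ H1) (dq _ _ H2) dN; rewrite dvdz1.
Qed.

Lemma P1rel_shear N p q : P1rel N p q -> P1rel N (p.1, p.1 + p.2) (q.1, q.1 + q.2).
Proof.
case/P1relE=> k Hk /andP[H1 H2]; apply/P1relE; exists k => //=; rewrite H1 /=.
have -> : q.1 + q.2 - k * (p.1 + p.2) = 1 * (q.1 - k * p.1) + 1 * (q.2 - k * p.2) by ring.
exact: dvdz_lincomb.
Qed.

Lemma P1rel_dvdn N N' p q : (N' %| N)%N -> P1rel N p q -> P1rel N' p q.
Proof.
move=> dvdN /P1relE[k Hk /andP[H1 H2]]; apply/P1relE; exists k.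
  exact: coprimez_dvdr Hk.
have dvdNz : (N'%:Z %| N%:Z)%Z by rewrite dvdzE.
by rewrite !(dvdz_trans dvdNz).
Qed.

Lemma sigma_cls n m p : sigma m n (cls (n * m) p) = cls n p.
Proof.
apply: functional_extensionality => r; apply: propositional_extensionality.
split=> [[q [Hq Hr]] | Hr]; last by exists p; split; first exact: P1rel_refl.
exact: P1rel_trans (P1rel_dvdn (dvdn_mulr m (dvdnn n)) Hq) Hr.
Qed.

Lemma exists_nat_mod (z : int) (M : nat) : (0 < M)%N ->
  exists2 r : nat, (r < M)%N & (M%:Z %| z - r%:Z)%Z.
Proof.
move=> M0; have Mz : 0 < M%:Z by rewrite ltz_nat.
have r_ge0 := modz_ge0 z (lt0r_neq0 Mz).
exists `|(z %% M%:Z)%Z|%N; first by rewrite -ltz_nat gez0_abs // ltz_pmod.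
by rewrite gez0_abs // {1}(divz_eq z M%:Z) addrK dvdz_mull.
Qed.

Lemma coprime_addMn_exists (Y x s : nat) : (0 < Y)%N -> coprime (gcdn Y x) s ->
  exists t, coprime Y (x + t * s).
Proof.
move=> Y0 cop; set t := \prod_(p <- primes Y | ~~ (p %| x)%N) p; exists t.
apply: contraT => ncop.
have [p pp] : {p | prime p & p %| gcdn Y (x + t * s)}%N.
  by apply: pdivP; move: ncop; rewrite /coprime; have := gcdn_gt0 Y (x + t * s); lia.
rewrite dvdn_gcd => /andP[pY pxt].
have pt : (p %| t)%N = ~~ (p %| x)%N.
  rewrite Euclid_dvd_prod // big_has_cond; apply/hasP/idP => [[q] | npx].
    rewrite mem_primes => /and3P[qp _ _] /andP[/= nqx].
    by rewrite dvdn_prime2 // => /eqP ->.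
  by exists p; rewrite ?mem_primes ?pp ?Y0 ?pY //= npx /=.
have [px | npx] := boolP (p %| x)%N.
  move: pxt; rewrite dvdn_addr // Euclid_dvdM // pt px /= => ps.
  have : (p %| gcdn (gcdn Y x) s)%N by rewrite !dvdn_gcd pY px ps.
  by rewrite (eqP cop) dvdn1 => /eqP p1; rewrite p1 in pp.
by move: pxt; rewrite dvdn_addl ?(negbTE npx) // dvdn_mulr // pt.
Qed.

Lemma dN_congr N c b : ((N %/ c)%N%:Z %| (dN N c b)%:Z - (c + b)%N%:Z)%Z.
Proof. by rewrite /dN PoszD addrAC subrr add0r PoszM dvdz_mull. Qed.

Lemma coprime_dN N c b : (0 < c)%N -> coprime (gcdn c b) (N %/ c) ->
  coprime c (dN N c b).
Proof.
move=> c0 cop; have [t ct] := coprime_addMn_exists c0 cop.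
set P := fun k => coprime c (b + k * (N %/ c)).
have P_mod k : P k = P (k %% c)%N.
  by rewrite /P /coprime -gcdn_modr -[in RHS]gcdn_modr -modnDmr -modnMml modnDmr.
have hasP : has P (iota 0 c).
  by apply/hasP; exists (t %% c)%N; rewrite ?mem_iota ?add0n ?ltn_mod // -P_mod.
have := nth_find 0 hasP; rewrite has_find size_iota in hasP.
by rewrite nth_iota // add0n /P /dN -addnA /coprime gcdnDl.
Qed.

Lemma P1rel_pivotP N (g : nat) (c e D : int) : (0 < g)%N -> (g %| N)%N ->
  coprimez g D -> primN N (c, e) ->
  P1rel N (c, e) (g%:Z, D) <-> (g%:Z %| c)%Z /\ (N%:Z %| g%:Z * e - c * D)%Z.
Proof.
move=> g0 gN gD prim; have gNz : (g%:Z %| N%:Z)%Z by rewrite dvdzE.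
split=> [/P1relE[k Hk /andP[/= H1 H2]] | [/dvdzP[c' Ec] HN]].
  have gk : coprimez g k by rewrite coprimez_sym (coprimez_dvdr gN Hk).
  split.
    rewrite -(Gauss_dvdzr _ gk).
    have -> : k * c = 1 * g%:Z + (-1) * (g%:Z - k * c) by ring.
    by rewrite dvdz_lincomb ?dvdzz ?(dvdz_trans gNz).
  have -> : g%:Z * e - c * D = e * (g%:Z - k * c) + (- c) * (D - k * e) by ring.
  exact: dvdz_lincomb.
subst c; set M := (N %/ g)%N; have NE : N%:Z = M%:Z * g%:Z by rewrite -PoszM divnK.
have g0z : g%:Z != 0 by rewrite eqz_nat -lt0n.
have [r Hr] : exists r, e = c' * D + r * M%:Z.
  move: HN; rewrite NE (_ : _ - _ = (e - c' * D) * g%:Z); last by ring.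
  by rewrite dvdz_mul2r // => /dvdzP[r Hr]; exists r; rewrite -Hr; ring.
have [[u v] /= Huv] := coprimezP _ _ gD.
apply: P1rel_sym; apply: (P1rel_scale (k := c' + r * v * M%:Z)) => /=.
- exact: prim.
- by apply/dvdzP; exists (- (r * v)); rewrite NE; ring.
apply/dvdzP; exists (r * u); rewrite Hr NE -{1}[r * M%:Z]mulr1 -Huv; ring.
Qed.

Lemma exists_goodpair N p : (0 < N)%N -> primN N p ->
  exists2 cb, goodpair N cb & P1rel N p (cb.1%:Z, (dN N cb.1 cb.2)%:Z).
Proof.
case: p => x y N0 prim; set g := gcdn `|x| N; set M := (N %/ g)%N.
have g0 : (0 < g)%N by rewrite gcdn_gt0 N0 orbT.
have gN : (g %| N)%N := dvdn_gcdr _ _.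
have M0 : (0 < M)%N by rewrite divn_gt0 // dvdn_leq.
have NE : N%:Z = M%:Z * g%:Z by rewrite -PoszM divnK.
have [x' Ex] : exists x', x = x' * g%:Z by apply/dvdzP; rewrite dvdzE dvdn_gcdl.
have [u [v Huv]] : exists u v, u * x' + v * M%:Z = 1.
  have [u [v Huvg]] := Bezoutz x N; exists u, v.
  apply: (mulIf (x := g%:Z)); first by rewrite eqz_nat -lt0n.
  by rewrite mul1r mulrDl -!mulrA -Ex -NE Huvg.
have [b bM Mb] := exists_nat_mod (u * y - g%:Z) M0.
have cop : coprime (gcdn g b) M.
  set d := gcdz (gcdz g b) M.
  have dg : (d %| g%:Z)%Z := dvdz_trans (dvdz_gcdl _ _) (dvdz_gcdl _ _).
  have db : (d %| b%:Z)%Z := dvdz_trans (dvdz_gcdl _ _) (dvdz_gcdr _ _).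
  have dM : (d %| M%:Z)%Z := dvdz_gcdr _ _.
  have : (d %| 1)%Z.
    apply: (primN_dvdz1 prim) => /=; first by rewrite Ex dvdz_mull.
      have -> : y = x' * ((u * y - g%:Z - b%:Z) + g%:Z + b%:Z) + (v * y) * M%:Z.
        by rewrite -{1}[y]mul1r -Huv; ring.
      by rewrite dvdz_lincomb // (rpredD (rpredD _ dg) db) // (dvdz_trans dM).
    by rewrite NE dvdz_mulr.
  by rewrite dvdz1.
have gD : coprimez g (dN N g b) by rewrite coprimezE /= coprime_dN.
exists (g, b); first by split=> //; [lia | exact/eqP].
apply/(P1rel_pivotP g0 gN gD prim); split=> /=; first by rewrite Ex dvdz_mull.
rewrite NE Ex (_ : _ - _ = (y - x' * (dN N g b)%:Z) * g%:Z); last by ring.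
rewrite dvdz_mul2r ?eqz_nat -?lt0n //.
have -> : y - x' * (dN N g b)%:Z =
    x' * ((u * y - g%:Z - b%:Z) - ((dN N g b)%:Z - (g + b)%N%:Z)) + (v * y) * M%:Z.
  by rewrite PoszD -{1}[y]mul1r -Huv; ring.
by rewrite dvdz_lincomb ?dvdzz // rpredB // dN_congr.
Qed.

Lemma Apair_spec N l : (0 < N)%N -> IN N l ->
  goodpair N (Apair N l) /\
  cls N ((Apair N l).1%:Z, (dN N (Apair N l).1 (Apair N l).2)%:Z) = l.
Proof.
move=> N0 [p [prim ->]]; apply: (epsilon_spec (inhabits (1%N, 0%N))
  (fun cb => goodpair N cb /\ cls N (cb.1%:Z, (dN N cb.1 cb.2)%:Z) = cls N p)).
have [cb good Hp] := exists_goodpair N0 prim.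
by exists cb; split=> //; apply/cls_eqP/P1rel_sym.
Qed.

Lemma mx2_eta (A : 'M[int]_2) : A = mx2 (A 0 0) (A 0 1) (A 1 0) (A 1 1).
Proof.
apply/matrixP => -[[|[|//]] i2] -[[|[|//]] j2];
  by rewrite mxE /=; congr (A _ _); apply: val_inj.
Qed.

Lemma mx2_inj a b c d a' b' c' d' : mx2 a b c d = mx2 a' b' c' d' ->
  [/\ a = a', b = b', c = c' & d = d'].
Proof.
move=> E; have entry i j : mx2 a b c d i j = mx2 a' b' c' d' i j by rewrite E.
by move: (entry 0 0) (entry 0 1) (entry 1 0) (entry 1 1); rewrite !mxE.
Qed.

Lemma mulmx2 a b c d a' b' c' d' : mx2 a b c d *m mx2 a' b' c' d' =
  mx2 (a * a' + b * c') (a * b' + b * d') (c * a' + d * c') (c * b' + d * d').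
Proof.
apply/matrixP => -[[|[|//]] i2] -[[|[|//]] j2];
  by rewrite !mxE !big_ord_recl big_ord0 !mxE /= addr0.
Qed.

Lemma det_mx2 a b c d : \det (mx2 a b c d) = a * d - b * c.
Proof.
rewrite (expand_det_row _ 0) !big_ord_recl big_ord0 /cofactor !det_mx11 !mxE /=.
rewrite expr0 expr1; ring.
Qed.

Lemma WN_coset_mx2P N (g b : nat) (x y c d : int) : (0 < N)%N -> (g %| N)%N ->
  x * d - y * c = 1 ->
  (exists S, SL2Z S /\ WN N *m mx2 x y c d = S *m mx2 g%:Z b%:Z 0 (N %/ g)%N%:Z) <->
  (g%:Z %| c)%Z /\ (N%:Z %| g%:Z * d - c * b%:Z)%Z.
Proof.
move=> N0 gN det1; set M := (N %/ g)%N.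
have NE : N%:Z = M%:Z * g%:Z by rewrite -PoszM divnK.
have g0 : g%:Z != 0 by rewrite eqz_nat -lt0n (dvdn_gt0 N0 gN).
have -> : WN N *m mx2 x y c d = mx2 c d (- (N%:Z * x)) (- (N%:Z * y)).
  by rewrite /WN mulmx2; congr mx2; ring.
split=> [[S [_]] | [/dvdzP[c' Ec] /dvdzP[t Et]]].
  rewrite [S]mx2_eta mulmx2 => /mx2_inj[Ec Ed _ _].
  split; apply/dvdzP; [exists (S 0 0) | exists (S 0 1)]; rewrite Ec ?Ed ?NE; ring.
subst c; have Ed : d = c' * b%:Z + t * M%:Z.
  have : (d - (c' * b%:Z + t * M%:Z)) * g%:Z = (g%:Z * d - c' * g%:Z * b%:Z) - t * N%:Z.
    by rewrite NE; ring.
  by rewrite Et subrr => /eqP; rewrite mulf_eq0 (negbTE g0) orbF subr_eq0 => /eqP.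
subst d; exists (mx2 c' t (- (M%:Z * x)) (x * b%:Z - g%:Z * y)); split.
  by rewrite /SL2Z det_mx2 -det1; ring.
by rewrite mulmx2 NE; congr mx2; ring.
Qed.

Lemma SL2Z_lift N p : (0 < N)%N -> primN N p ->
  exists R, SL2Z R /\ P1rel N p (R 1 0, R 1 1).
Proof.
case: p => x y N0 prim.
(* A bottom row (c, 0) is unimodular only for c = 1 or -1, so y = 0 is first replaced by N. *)
set y' := if y == 0 then N%:Z else y.
have y'0 : y' != 0 by rewrite /y'; case: (y =P 0) => [_ | /eqP //]; lia.
have Ny' : (N%:Z %| y' - y)%Z.
  by rewrite /y'; case: (y =P 0) => [->|_]; rewrite ?subr0 ?subrr ?dvdzz ?dvdz0.
have [x0 _ Nx0] := exists_nat_mod x N0.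
have Y0 : (0 < `|y'|)%N by rewrite absz_gt0.
have cop : coprime (gcdn `|y'| x0) N.
  set d := gcdz (gcdz y' x0) N.
  have dy' : (d %| y')%Z := dvdz_trans (dvdz_gcdl _ _) (dvdz_gcdl _ _).
  have dx0 : (d %| x0%:Z)%Z := dvdz_trans (dvdz_gcdl _ _) (dvdz_gcdr _ _).
  have dN : (d %| N%:Z)%Z := dvdz_gcdr _ _.
  have : (d %| 1)%Z.
    apply: (primN_dvdz1 prim) => //=.
      by rewrite -(subrK x0%:Z x) rpredD // (dvdz_trans dN).
    by rewrite -(subKr y' y) rpredB // (dvdz_trans dN).
  by rewrite dvdz1.
have [t cop_t] := coprime_addMn_exists Y0 cop.
set c := (x0 + t * N)%N%:Z.
have cy' : coprimez c y' by rewrite coprimezE /= coprime_sym.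
have [[u v] /= Huv] := coprimezP _ _ cy'.
exists (mx2 v (- u) c y'); split; first by rewrite /SL2Z det_mx2 -Huv; ring.
apply/P1relE; exists 1; first by rewrite coprimezE coprime1n.
rewrite !mxE /= !mul1r Ny' andbT /c PoszD PoszM.
have -> : x0%:Z + t%:Z * N%:Z - x = t%:Z * N%:Z + (-1) * (x - x0%:Z) by ring.
by rewrite dvdz_lincomb ?dvdzz.
Qed.

Lemma Rrep_spec N p : (0 < N)%N -> primN N p ->
  SL2Z (Rrep N (cls N p)) /\ P1rel N p (Rrep N (cls N p) 1 0, Rrep N (cls N p) 1 1).
Proof.
move=> N0 prim; have [R0 [HR0 Hp0]] := SL2Z_lift N0 prim.
have row1 (R : 'M[int]_2) : (R ord_max ord0, R ord_max ord_max) = (R 1 0, R 1 1).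
  by congr pair; congr (R _ _); apply: val_inj.
rewrite -row1; apply: (epsilon_spec (inhabits (1%:M : 'M[int]_2))
  (fun R => SL2Z R /\ cls N p (R ord_max ord0, R ord_max ord_max))).
by exists R0; rewrite row1.
Qed.

Lemma primN_shear N (x y c d : int) : x * d - y * c = 1 -> primN N (c, c + d).
Proof.
move=> det1; apply/primN_coprime/coprimezP; exists (- y - x, x) => /=.
by rewrite -det1; ring.
Qed.

Lemma WN_coset_AmatP N l (x y c d : int) : (0 < N)%N -> IN N l -> x * d - y * c = 1 ->
  (exists S, SL2Z S /\ WN N *m mx2 x y c d = S *m Amat N l) <-> l = cls N (c, c + d).
Proof.
move=> N0 Hl det1; have [good El] := Apair_spec N0 Hl; move: good El.
rewrite /Amat; case: (Apair N l) => g b /= [g0 gN _ cop] <-.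
have gD : coprimez g (dN N g b) by rewrite coprimezE /= coprime_dN //; exact/eqP.
rewrite (WN_coset_mx2P _ N0 gN det1) cls_eqP P1relC.
rewrite (P1rel_pivotP g0 gN gD (primN_shear N det1)) /=.
suff shift : (g%:Z %| c)%Z -> (N%:Z %| g%:Z * (c + d) - c * (dN N g b)%:Z)%Z =
                              (N%:Z %| g%:Z * d - c * b%:Z)%Z.
  by split=> -[gc]; rewrite shift.
case/dvdzP=> c' ->.
have NE : N%:Z = (N %/ g)%N%:Z * g%:Z by rewrite -PoszM divnK.
rewrite (_ : _ - _ = (g%:Z * d - c' * g%:Z * b%:Z)
                     + (- c') * (((dN N g b)%:Z - (g + b)%N%:Z) * g%:Z)); last first.
  by rewrite PoszD; ring.
by rewrite rpredDr // dvdz_mull // NE dvdz_mul2r ?dN_congr // eqz_nat -lt0n.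
Qed.

Lemma hN_cls N p : (0 < N)%N -> primN N p -> hN N (cls N p) = cls N (p.1, p.1 + p.2).
Proof.
move=> N0 prim; have [HR Hp] := Rrep_spec N0 prim.
set R := Rrep N (cls N p) in HR Hp *; set q := (R 1 0, R 1 0 + R 1 1).
have det1 : R 0 0 * R 1 1 - R 0 1 * R 1 0 = 1 by rewrite -det_mx2 -mx2_eta.
have coset l : IN N l -> (exists S, SL2Z S /\ WN N *m R = S *m Amat N l) <-> l = cls N q.
  by move=> Hl; rewrite [R]mx2_eta; exact: WN_coset_AmatP.
have [Hl HS] : IN N (hN N (cls N p)) /\
    exists S, SL2Z S /\ WN N *m R = S *m Amat N (hN N (cls N p)).
  apply: (epsilon_spec (inhabits (fun _ => False) : inhabited pairset)
    (fun l => IN N l /\ exists S, SL2Z S /\ WN N *m R = S *m Amat N l)).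
  have Hq : IN N (cls N q) by exists q; split; first exact: primN_shear det1.
  by exists (cls N q); split=> //; apply/(coset _ Hq).
by rewrite (proj1 (coset _ Hl) HS); apply/esym/cls_eqP; exact: P1rel_shear Hp.
Qed.

Theorem mainTheorem16 (n m : nat) (i : pairset) :
  (0 < n)%N -> (0 < m)%N -> IN (n * m) i ->
  hN n (sigma m n i) = sigma m n (hN (n * m) i).
Proof.
move=> n0 m0 [p [prim ->]].
have nm0 : (0 < n * m)%N by rewrite muln_gt0 n0 m0.
have prim_n : primN n p := primN_dvdn (dvdn_mulr m (dvdnn n)) prim.
by rewrite !sigma_cls hN_cls // hN_cls // sigma_cls.
Qed.
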